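(* There is a polynomial $f$ such that every satisfiable $\mathrm{LTL_{PSL}}$ formula $\varphi$ is satisfied in an $\mathrm{SLTL}$ model $M=(\Pi,\lambda)$ (i.e. $M,\sigma,0\models\varphi$ for some $\sigma\in\Pi$) with $|\Pi|\le f(|\varphi|)$, where $|\varphi|$ is the size of $\varphi$.
   Context: Fix countably infinite sets $\mathcal{P}$ of propositional variables and $\mathcal{S}$ of standpoint symbols containing a universal symbol $*$. SLTL formulae: $\varphi ::= p \mid s \preceq s' \mid \neg\varphi \mid \varphi\wedge\varphi \mid \Diamond_s\varphi \mid \Box_s\varphi \mid X\varphi \mid \varphi\,U\,\varphi$. A model is $M=(\Pi,\lambda)$ with $\Pi\neq\emptyset$ a set of traces $\sigma:\mathbb{N}\to 2^{\mathcal{P}}$ and $\lambda:\mathcal{S}\to 2^{\Pi}\setminus\{\emptyset\}$ with $\lambda( * )=\Pi$. Semantics: $M,\sigma,i\models p$ iff $p\in\sigma(i)$; $M,\sigma,i\models s\preceq s'$ iff $\lambda(s)\subseteq\lambda(s')$; Boolean clauses as usual; $\Diamond_s\psi$ (resp. $\Box_s\psi$) holds at $\sigma,i$ iff $\psi$ holds at $\sigma',i$ for some (resp. all) $\sigma'\in\lambda(s)$; $X\psi$ holds at $\sigma,i$ iff $\psi$ holds at $\sigma,i+1$; $\psi U\chi$ holds at $\sigma,i$ iff $\chi$ holds at $\sigma,i'$ for some $i'\ge i$ and $\psi$ holds at $\sigma,i''$ for all $i\le i''<i'$. $\varphi$ is satisfiable iff $M,\sigma,0\models\varphi$ for some $M=(\Pi,\lambda)$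 and $\sigma\in\Pi$. $\mathrm{LTL_{PSL}}$ is the fragment of SLTL consisting of formulae in which no temporal connective ($X$ or $U$) occurs in the scope of a standpoint modality $\Diamond_s$ or $\Box_s$. *)

From Stdlib Require List.
From mathcomp Require Import all_boot all_order all_algebra.
Set Implicit Arguments. Unset Strict Implicit. Unset Printing Implicit Defensive.

(* Propositional variables: nat (countably infinite).
   Standpoint symbols: the universal symbol [Univ] (= * ) plus countably many [Sp n]. *)
Inductive standpoint : Type := Univ | Sp (n : nat).

Inductive sltl : Type :=
  | FVar   (p : nat)
  | FSharp (s s' : standpoint)
  | FNeg   (phi : sltl)
  | FAnd   (phi psi : sltl)
  | FDia   (s : standpoint) (phi : sltl)
  | FBox   (s : standpoint) (phi : sltl)
  | FNext  (phi : sltl)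
  | FUntil (phi psi : sltl).

(* A trace sigma : N -> 2^P, represented by its characteristic function. *)
Definition trace := nat -> nat -> bool.

Record model : Type := Model {
  Pi : trace -> Prop;
  lam : standpoint -> trace -> Prop;
  Pi_nonempty : exists sigma, Pi sigma;
  lam_sub : forall s sigma, lam s sigma -> Pi sigma;
  lam_nonempty : forall s, exists sigma, lam s sigma;
  lam_univ : forall sigma, lam Univ sigma <-> Pi sigma
}.

Fixpoint sat (M : model) (sigma : trace) (i : nat) (phi : sltl) : Prop :=
  match phi with
  | FVar p => sigma i p = true
  | FSharp s s' => forall tau, lam M s tau -> lam M s' tau
  | FNeg psi => ~ sat M sigma i psi
  | FAnd psi chi => sat M sigma i psi /\ sat M sigma i chi
  | FDia s psi => exists tau, lam M s tau /\ sat M tau i psi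
  | FBox s psi => forall tau, lam M s tau -> sat M tau i psi
  | FNext psi => sat M sigma i.+1 psi
  | FUntil psi chi =>
      exists i', i <= i' /\ sat M sigma i' chi /\
                 (forall i'', i <= i'' -> i'' < i' -> sat M sigma i'' psi)
  end.

Definition satisfiable (phi : sltl) : Prop :=
  exists (M : model) (sigma : trace), Pi M sigma /\ sat M sigma 0 phi.

Fixpoint fsize (phi : sltl) : nat :=
  match phi with
  | FVar _ | FSharp _ _ => 1
  | FNeg psi | FDia _ psi | FBox _ psi | FNext psi => (fsize psi).+1
  | FAnd psi chi | FUntil psi chi => (fsize psi + fsize chi).+1
  end.

Fixpoint temporal_free (phi : sltl) : bool :=
  match phi with
  | FVar _ | FSharp _ _ => true
  | FNeg psi | FDia _ psi | FBox _ psi => temporal_free psi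
  | FAnd psi chi => temporal_free psi && temporal_free chi
  | FNext _ | FUntil _ _ => false
  end.

Fixpoint ltl_psl (phi : sltl) : bool :=
  match phi with
  | FVar _ | FSharp _ _ => true
  | FNeg psi | FNext psi => ltl_psl psi
  | FAnd psi chi | FUntil psi chi => ltl_psl psi && ltl_psl chi
  | FDia _ psi | FBox _ psi => temporal_free psi
  end.

Definition card_le (Pi : trace -> Prop) (n : nat) : Prop :=
  exists l : seq trace, size l <= n /\ forall sigma, Pi sigma -> List.In sigma l.

From mathcomp Require Import all_boot all_order all_algebra.
From mathcomp Require Import zify.
From Stdlib Require Import Classical ClassicalEpsilon.
Import GRing.Theory Num.Theory.

(** Given a model of [phi] and a trace [sigma] satisfying it, keep only [sigma],
    one representative of every standpoint of [phi], and, for every modal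
    subformula [◇_s psi] (a box [□_s psi] read as [◇_s ¬psi]), a family choosing
    at each time [i] a witness of [psi] at time [i] in [λ(s)].  As no temporal
    operator occurs under a modality, the truth of a modal subformula at time [i]
    only depends on the valuations at time [i], so each family can be stitched
    into a single trace whose valuation at time [i] is that of its [i]-th member.
    Interpreting a standpoint [s] of [phi] by the stitched families lying in a
    standpoint sharper than [s] preserves [⪯] and the modalities, and [sigma] is
    kept, so [phi] holds in a model with at most [3 |phi| + 1] traces. *)

Lemma nth_In {T : Type} (x0 : T) (s : seq T) k : k < size s -> List.In (nth x0 s k) s.
Proof. by elim: s k => [|x s IHs] [|k] //= => [|/IHs]; [left | right]. Qed.

Lemma In_nth {T : Type} (x0 x : T) (s : seq T) :
  List.In x s -> exists2 k, k < size s & nth x0 s k = x.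
Proof.
elim: s => [|y s IHs] //= [<-|/IHs[k lt_k <-]]; first by exists 0.
by exists k.+1.
Qed.

Fixpoint max_var (phi : sltl) : nat :=
  match phi with
  | FVar p => p
  | FSharp _ _ => 0
  | FNeg a | FDia _ a | FBox _ a | FNext a => max_var a
  | FAnd a b | FUntil a b => maxn (max_var a) (max_var b)
  end.

Fixpoint standpoints (phi : sltl) : seq standpoint :=
  match phi with
  | FVar _ => [::]
  | FSharp s s' => [:: s; s']
  | FNeg a | FNext a => standpoints a
  | FDia s a | FBox s a => s :: standpoints a
  | FAnd a b | FUntil a b => standpoints a ++ standpoints b
  end.

(* A box [□_s a] is recorded as the diamond [◇_s ¬a] whose witnesses refute it. *)
Fixpoint diamonds (phi : sltl) : seq (standpoint * sltl) :=
  match phi with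
  | FVar _ | FSharp _ _ => [::]
  | FNeg a | FNext a => diamonds a
  | FDia s a => (s, a) :: diamonds a
  | FBox s a => (s, FNeg a) :: diamonds a
  | FAnd a b | FUntil a b => diamonds a ++ diamonds b
  end.

Lemma size_standpoints phi : size (standpoints phi) <= 2 * fsize phi.
Proof. by elim: phi => //= *; rewrite ?size_cat; lia. Qed.

Lemma size_diamonds phi : size (diamonds phi) <= fsize phi.
Proof. by elim: phi => //= *; rewrite ?size_cat; lia. Qed.

Definition choose_in (P Q : trace -> Prop) : trace :=
  epsilon (inhabits (fun _ _ => false))
    (fun w => P w /\ (Q w \/ ~ exists v, P v /\ Q v)).

Lemma choose_in_spec (P Q : trace -> Prop) : (exists w, P w) ->
  P (choose_in P Q) /\ ((exists w, P w /\ Q w) -> Q (choose_in P Q)).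
Proof.
move=> [w Pw]; have exPQ : exists w, P w /\ (Q w \/ ~ exists v, P v /\ Q v).
  have [[v [Pv Qv]]|noPQ] := classic (exists v, P v /\ Q v).
    by exists v; split; [|left].
  by exists w; split; [|right].
have [Pc QorNo] := epsilon_spec (inhabits (fun _ _ => false)) _ exPQ.
by split=> // exPQ'; case: QorNo.
Qed.

Lemma choose_in_mem (P Q : trace -> Prop) : (exists w, P w) -> P (choose_in P Q).
Proof. by move=> exP; case: (choose_in_spec P Q exP). Qed.

Lemma choose_in_sat (P Q : trace -> Prop) :
  (exists w, P w /\ Q w) -> Q (choose_in P Q).
Proof.
move=> exPQ; have [w [Pw _]] := exPQ.
by case: (choose_in_spec P Q (ex_intro _ w Pw)) => _; apply.
Qed.

Definition family0 : standpoint * (nat -> trace) := (Univ, fun _ _ _ => false).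

Section Stitching.

Variables (M : model) (N : nat) (families : seq (standpoint * (nat -> trace))).

Local Notation family k := (nth family0 families k).
Local Notation n := (size families).

(* The variables below [N] are copied from the [i]-th trace of the [k]-th family at
   time [i]; the marker variable [N + k] makes [stitch] injective. *)
Definition stitch (k : nat) : trace :=
  fun i p => if p < N then (family k).2 i i p else p == N + k.

Lemma stitch_inj : injective stitch.
Proof.
move=> k l /(congr1 (fun tau => tau 0 (N + k))).
by rewrite /stitch ltnNge leq_addr eqxx => /esym/eqP/addnI.
Qed.

Lemma stitch_now k i p : p < N -> stitch k i p = (family k).2 i i p.
Proof. by rewrite /stitch => ->. Qed.

Definition labelled (u : standpoint) : Prop := exists2 k, k < n & (family k).1 = u.

Definition stitched_Pi (tau : trace) : Prop := exists2 k, k < n & tau = stitch k.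

(* Taking every family whose label is sharper than [u], rather than the
   families labelled [u], is what makes [s ⪯ s'] transfer. *)
Definition stitched_lam (u : standpoint) (tau : trace) : Prop :=
  exists2 k, k < n &
    tau = stitch k /\ (labelled u -> forall w, lam M (family k).1 w -> lam M u w).

Hypothesis families_nonempty : 0 < n.

Lemma stitched_Pi_nonempty : exists tau, stitched_Pi tau.
Proof. by exists (stitch 0); exists 0. Qed.

Lemma stitched_lam_sub u tau : stitched_lam u tau -> stitched_Pi tau.
Proof. by case=> k lt_k [-> _]; exists k. Qed.

Lemma stitched_lam_nonempty u : exists tau, stitched_lam u tau.
Proof.
have [[k lt_k ku]|unlabelled] := classic (labelled u).
  by exists (stitch k), k => //; split=> // _; rewrite ku.
by exists (stitch 0), 0.
Qed.

Lemma stitched_lam_univ tau : stitched_lam Univ tau <-> stitched_Pi tau.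
Proof.
split; first exact: stitched_lam_sub.
by case=> k lt_k ->; exists k => //; split=> // _ w /lam_sub /lam_univ.
Qed.

Definition stitched : model :=
  Model stitched_Pi_nonempty stitched_lam_sub stitched_lam_nonempty stitched_lam_univ.

Lemma stitched_card : card_le (Pi stitched) n.
Proof.
exists (mkseq stitch n); rewrite size_mkseq; split=> // _ [k lt_k ->].
by rewrite -(nth_mkseq (stitch 0) stitch lt_k); apply: nth_In; rewrite size_mkseq.
Qed.

Hypothesis families_in_lam : forall k i, k < n -> lam M (family k).1 ((family k).2 i).

Definition witnessed (d : standpoint * sltl) : Prop :=
  forall i, (exists w, lam M d.1 w /\ sat M w i d.2) ->
  exists2 k, k < n & (family k).1 = d.1 /\ sat M ((family k).2 i) i d.2.

Lemma stitched_sharp s s' : labelled s -> labelled s' ->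
  (forall tau, stitched_lam s tau -> stitched_lam s' tau) <->
  (forall w, lam M s w -> lam M s' w).
Proof.
move=> lab_s lab_s'; split=> [sub | sub _ [k lt_k [-> sharp]]].
  have [k lt_k ks] := lab_s.
  have [|l _ [/stitch_inj <- sharp]] := sub (stitch k).
    by exists k => //; split=> // _; rewrite ks.
  by rewrite -ks; apply: sharp.
by exists k => //; split=> // _ w /(sharp lab_s) /sub.
Qed.

Lemma sat_stitched_now psi : temporal_free psi -> max_var psi < N ->
  List.Forall labelled (standpoints psi) -> List.Forall witnessed (diamonds psi) ->
  forall i tau o, (forall p, p < N -> tau i p = o i p) ->
  sat stitched tau i psi <-> sat M o i psi.
Proof.
elim: psi => [p|s s'|a IHa|a IHa b IHb|t a IHa|t a IHa|//|//] /=.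
- by move=> _ lt_pN _ _ i tau o eq_io; rewrite eq_io.
- move=> _ _ /List.Forall_cons_iff[lab_s /List.Forall_cons_iff[lab_s' _]] _ _ _ _ _.
  exact: stitched_sharp.
- by move=> tf_a lt_aN lab wit i tau o eq_io; apply/not_iff_compat/IHa.
- move=> /andP[tf_a tf_b]; rewrite gtn_max => /andP[lt_aN lt_bN].
  move=> /List.Forall_app[lab_a lab_b] /List.Forall_app[wit_a wit_b] i tau o eq_io.
  have {}IHa := IHa tf_a lt_aN lab_a wit_a i tau o eq_io.
  have {}IHb := IHb tf_b lt_bN lab_b wit_b i tau o eq_io.
  by split=> -[/IHa a_i /IHb b_i].
- move=> tf_a lt_aN /List.Forall_cons_iff[lab_t lab_a] /List.Forall_cons_iff[wit_t wit_a].
  move=> i tau o _.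
  have IH k : sat stitched (stitch k) i a <-> sat M ((family k).2 i) i a.
    exact: IHa (stitch_now k i).
  split=> [[_ [[k lt_k [-> sharp]] /IH sat_k]] | /wit_t[k lt_k [kt /IH sat_k]]].
    by exists ((family k).2 i); split=> //; apply: (sharp lab_t); apply: families_in_lam.
  by exists (stitch k); split=> //; exists k => //; split=> // _; rewrite kt.
- move=> tf_a lt_aN /List.Forall_cons_iff[lab_t lab_a] /List.Forall_cons_iff[wit_t wit_a].
  move=> i tau o _.
  have IH k : sat stitched (stitch k) i a <-> sat M ((family k).2 i) i a.
    exact: IHa (stitch_now k i).
  split=> [all_a w t_w | all_a _ [k lt_k [-> sharp]]].
    apply: NNPP => not_a; have [k lt_k [kt]] := wit_t i (ex_intro _ w (conj t_w not_a)).
    by apply; apply/IH; apply: all_a; exists k => //; split=> // _; rewrite kt.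
  by apply/IH; apply: all_a; apply: (sharp lab_t); apply: families_in_lam.
Qed.

Lemma sat_stitched psi : ltl_psl psi -> max_var psi < N ->
  List.Forall labelled (standpoints psi) -> List.Forall witnessed (diamonds psi) ->
  forall tau o, (forall i p, p < N -> tau i p = o i p) ->
  forall i, sat stitched tau i psi <-> sat M o i psi.
Proof.
elim: psi => [p|s s'|a IHa|a IHa b IHb|t a _|t a _|a IHa|a IHa b IHb]
  lp lt lab wit tau o eq_o i.
- exact: (sat_stitched_now (FVar p) lp lt lab wit i tau o (eq_o i)).
- exact: (sat_stitched_now (FSharp s s') lp lt lab wit i tau o (eq_o i)).
- exact/not_iff_compat/IHa.
- move: lp lt lab wit => /andP[lp_a lp_b]; rewrite /= gtn_max => /andP[lt_aN lt_bN].
  move=> /List.Forall_app[lab_a lab_b] /List.Forall_app[wit_a wit_b].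
  have {}IHa := IHa lp_a lt_aN lab_a wit_a tau o eq_o i.
  have {}IHb := IHb lp_b lt_bN lab_b wit_b tau o eq_o i.
  by split=> -[/IHa a_i /IHb b_i].
- exact: (sat_stitched_now (FDia t a) lp lt lab wit i tau o (eq_o i)).
- exact: (sat_stitched_now (FBox t a) lp lt lab wit i tau o (eq_o i)).
- exact: IHa.
- move: lp lt lab wit => /andP[lp_a lp_b]; rewrite /= gtn_max => /andP[lt_aN lt_bN].
  move=> /List.Forall_app[lab_a lab_b] /List.Forall_app[wit_a wit_b].
  have IA := IHa lp_a lt_aN lab_a wit_a tau o eq_o.
  have IB := IHb lp_b lt_bN lab_b wit_b tau o eq_o.
  by split=> -[j [le_ij [/IB b_j a_before]]]; exists j;
    split=> //; split=> // k le_ik lt_kj; apply/IA; apply: a_before.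
Qed.

End Stitching.

Section SmallModel.

Variables (M : model) (sigma : trace) (phi : sltl).

Definition representative (t : standpoint) (Q : nat -> trace -> Prop) :
  standpoint * (nat -> trace) := (t, fun i => choose_in (lam M t) (Q i)).

Definition small_families : seq (standpoint * (nat -> trace)) :=
  (Univ, fun _ => sigma)
  :: [seq representative u (fun _ _ => True) | u <- standpoints phi]
  ++ [seq representative d.1 (fun i w => sat M w i d.2) | d <- diamonds phi].

Lemma small_families_nonempty : 0 < size small_families.
Proof. by []. Qed.

Lemma size_small_families : size small_families <= 3 * fsize phi + 1.
Proof.
rewrite /= size_cat !size_map.
by have := size_standpoints phi; have := size_diamonds phi; lia.
Qed.

Hypothesis Pi_sigma : Pi M sigma.

Lemma small_families_in_lam k i : k < size small_families ->
  lam M (nth family0 small_families k).1 ((nth family0 small_families k).2 i).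
Proof.
move/(nth_In family0) => [<- | /List.in_app_iff[] /List.in_map_iff[x [<- _]]].
- exact/lam_univ.
- exact: choose_in_mem (lam_nonempty M _).
- exact: choose_in_mem (lam_nonempty M _).
Qed.

Lemma labelled_small_families : List.Forall (labelled small_families) (standpoints phi).
Proof.
apply/List.Forall_forall => u phi_u.
have : List.In (representative u (fun _ _ => True)) small_families.
  by right; apply/List.in_app_iff; left; exact: (List.in_map (representative^~ _)).
by case/(In_nth family0) => k lt_k ku; exists k; rewrite // ku.
Qed.

Lemma witnessed_small_families : List.Forall (witnessed M small_families) (diamonds phi).
Proof.
apply/List.Forall_forall => d phi_d i ex_d.
have : List.In (representative d.1 (fun i w => sat M w i d.2)) small_families.
  right; apply/List.in_app_iff; right.
  exact: (List.in_map (fun d => representative d.1 (fun i w => sat M w i d.2))).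
case/(In_nth family0) => k lt_k kd; exists k; rewrite // kd; split=> //.
exact: (@choose_in_sat _ (fun w => sat M w i d.2) ex_d).
Qed.

Definition small_model : model :=
  stitched M (max_var phi).+1 small_families small_families_nonempty.

Definition small_sigma : trace := stitch (max_var phi).+1 small_families 0.

Lemma Pi_small_sigma : Pi small_model small_sigma.
Proof. by exists 0. Qed.

Lemma sat_small_model :
  ltl_psl phi -> sat small_model small_sigma 0 phi <-> sat M sigma 0 phi.
Proof.
move=> lp_phi.
apply: (@sat_stitched M _ _ small_families_nonempty small_families_in_lam phi lp_phi
  (ltnSn _) labelled_small_families witnessed_small_families).
by move=> i p lt_p; rewrite /small_sigma stitch_now.
Qed.

End SmallModel.

Local Open Scope ring_scope.

Theorem corollary3 :
  exists f : {poly int},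
    forall phi : sltl, ltl_psl phi -> satisfiable phi ->
      exists (M : model) (sigma : trace) (n : nat),
        Pi M sigma /\ sat M sigma 0 phi /\ card_le (Pi M) n /\
        (n%:Z <= f.[(fsize phi)%:Z]).
Proof.
exists (3%:P * 'X + 1); move=> phi lp_phi [M [sigma [Pi_sigma sat_sigma]]].
exists (small_model M sigma phi), (small_sigma M sigma phi), (size (small_families M sigma phi)).
split; first exact: Pi_small_sigma.
split; first exact/(sat_small_model M sigma phi Pi_sigma lp_phi).
split; first exact: stitched_card.
by have := size_small_families M sigma phi; rewrite !hornerE; lia.
Qed.
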